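(* Let $F:(0,\infty)\to(0,\infty)$ be strictly decreasing and let $(x_n)_{n\in\mathbb Z}$ be an equilibrium configuration for $F$ that is periodic, i.e. there are an integer $k\ge1$ and a real $t>0$ with $x_{n+k}=x_n+t$ for all $n\in\mathbb Z$. Then the configuration is trivial.
   Context: A force law is a strictly decreasing function $F:(0,\infty)\to(0,\infty)$; two particles at distance $d$ repel each other with force of magnitude $F(d)$. A configuration is a strictly increasing bi-infinite sequence $(x_n)_{n\in\mathbb Z}$ of reals. The particle at $x_n$ is in equilibrium if $\sum_{m<n}F(x_n-x_m)$ and $\sum_{m>n}F(x_m-x_n)$ are both finite and equal. An equilibrium configuration is a configuration in which every particle is in equilibrium. It is trivial if $x_{n+1}-x_n$ is constant. *)

From Stdlib Require Import Reals ZArith.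
Open Scope R_scope.

(* A force law: F : (0,oo) -> (0,oo) strictly decreasing.  F is a total
   function R -> R; only its values on (0,oo) matter. *)
Definition force_law (F : R -> R) : Prop :=
  (forall d, 0 < d -> 0 < F d) /\
  (forall d e, 0 < d -> d < e -> F e < F d).

Definition configuration (x : Z -> R) : Prop :=
  forall n : Z, x n < x (n + 1)%Z.

(* Particle n is in equilibrium: the left sum  sum_{m<n} F(x_n - x_m)
   = sum_{j>=0} F(x_n - x_{n-j-1}) and the right sum
   sum_{m>n} F(x_m - x_n) = sum_{j>=0} F(x_{n+j+1} - x_n) both converge
   (to finite limits) and are equal.  Terms are positive, so the
   enumeration order of the index sets is irrelevant. *)
Definition in_equilibrium (F : R -> R) (x : Z -> R) (n : Z) : Prop :=
  exists L : R,
    infinite_sum (fun j : nat => F (x n - x (n - Z.of_nat j - 1)%Z)) L /\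
    infinite_sum (fun j : nat => F (x (n + Z.of_nat j + 1)%Z - x n)) L.

Definition equilibrium_configuration (F : R -> R) (x : Z -> R) : Prop :=
  configuration x /\ forall n : Z, in_equilibrium F x n.

Definition trivial_configuration (x : Z -> R) : Prop :=
  exists c : R, forall n : Z, x (n + 1)%Z - x n = c.

(* Subtract the mean drift: with c := t / k the sequence x n - n c is k-periodic,
   so it attains its minimum at some particle n0.  Seen from n0, every left
   neighbour at index distance j+1 is at most (j+1) c away and every right one
   at least (j+1) c away, so termwise the left force sum dominates the right
   one.  Equilibrium makes the two sums equal, which forces termwise equality
   and, F being injective, equality of all these distances; the drift is
   therefore constant to the right of n0, hence everywhere by periodicity. *)

From Stdlib Require Import Reals ZArith Lra Lia.
Open Scope R_scope.

Lemma sum_f_R0_ge_term (d : nat -> R) (j : nat) :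
  (forall i, 0 <= d i) -> d j <= sum_f_R0 d j.
Proof.
  intros Hd; destruct j as [|j]; simpl; [lra|].
  pose proof (cond_pos_sum d j Hd); lra.
Qed.

(* Nonnegative terms summing to zero all vanish. *)
Lemma infinite_sum_le_eq (a b : nat -> R) (L : R) :
  (forall j, a j <= b j) -> infinite_sum a L -> infinite_sum b L ->
  forall j, a j = b j.
Proof.
  intros Hab Ha Hb j.
  set (d i := b i - a i).
  assert (Hd : forall i, 0 <= d i) by (intro i; unfold d; specialize (Hab i); lra).
  assert (Hd0 : Un_cv (fun n => sum_f_R0 d n) 0).
  { replace 0 with (L - L) by ring.
    eapply Un_cv_ext; [|exact (CV_minus _ _ _ _ Hb Ha)].
    intro n; symmetry; apply minus_sum. }
  pose proof (sum_f_R0_ge_term d j Hd).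
  pose proof (sum_incr d j 0 Hd0 Hd).
  specialize (Hd j); unfold d in *; lra.
Qed.

Lemma force_law_le (F : R -> R) :
  force_law F -> forall d e, 0 < d -> d <= e -> F e <= F d.
Proof.
  intros [_ Fdec] d e Hd Hde.
  destruct (Req_dec d e) as [->|Hne]; [lra|].
  apply Rlt_le, Fdec; lra.
Qed.

Lemma force_law_inj (F : R -> R) :
  force_law F -> forall d e, 0 < d -> 0 < e -> F d = F e -> d = e.
Proof.
  intros [_ Fdec] d e Hd He HFde.
  destruct (Rtotal_order d e) as [Hlt|[Heq|Hgt]]; [|exact Heq|].
  - pose proof (Fdec d e Hd Hlt); lra.
  - pose proof (Fdec e d He Hgt); lra.
Qed.

Lemma configuration_lt (x : Z -> R) :
  configuration x -> forall m n, (m < n)%Z -> x m < x n.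
Proof.
  intros Hx m n Hmn.
  replace n with (m + Z.of_nat (Z.to_nat (n - m - 1)) + 1)%Z by lia.
  induction (Z.to_nat (n - m - 1)) as [|j IH].
  - replace (m + Z.of_nat 0 + 1)%Z with (m + 1)%Z by lia; apply Hx.
  - replace (m + Z.of_nat (S j) + 1)%Z with (m + Z.of_nat j + 1 + 1)%Z by lia.
    specialize (Hx (m + Z.of_nat j + 1)%Z); lra.
Qed.

Lemma equilibrium_gaps_eq (F : R -> R) (x : Z -> R) (n : Z) :
  force_law F -> configuration x -> in_equilibrium F x n ->
  (forall j : nat, x n - x (n - Z.of_nat j - 1)%Z <= x (n + Z.of_nat j + 1)%Z - x n) ->
  forall j : nat, x (n + Z.of_nat j + 1)%Z - x n = x n - x (n - Z.of_nat j - 1)%Z.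
Proof.
  intros HF Hx [L [HL HR]] Hgap j.
  assert (Hleft : forall i : nat, 0 < x n - x (n - Z.of_nat i - 1)%Z)
    by (intro i; pose proof (configuration_lt x Hx (n - Z.of_nat i - 1) n ltac:(lia)); lra).
  assert (Hright : forall i : nat, 0 < x (n + Z.of_nat i + 1)%Z - x n)
    by (intro i; pose proof (configuration_lt x Hx n (n + Z.of_nat i + 1) ltac:(lia)); lra).
  apply (force_law_inj F HF); auto.
  exact (infinite_sum_le_eq _ _ L
           (fun i => force_law_le F HF _ _ (Hleft i) (Hgap i)) HR HL j).
Qed.

Section Periodic.

Variables (A : Type) (f : Z -> A) (k : Z).
Hypothesis f_periodic : forall n, f (n + k)%Z = f n.

Lemma periodic_Z_shift_mul (q : Z) : forall n, f (n + q * k)%Z = f n.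
Proof.
  induction q as [|q IH|q IH] using Z.peano_ind; intro n.
  - f_equal; lia.
  - replace (n + Z.succ q * k)%Z with (n + q * k + k)%Z by lia.
    rewrite f_periodic; apply IH.
  - rewrite <- f_periodic, <- (IH n); f_equal; lia.
Qed.

Lemma periodic_Z_const_of_const_ge (n0 : Z) :
  (0 < k)%Z -> (forall m, (n0 <= m)%Z -> f m = f n0) -> forall n, f n = f n0.
Proof.
  intros Hk Hconst n.
  rewrite <- (periodic_Z_shift_mul (Z.abs (n0 - n)) n).
  apply Hconst; nia.
Qed.

End Periodic.

Lemma Z_interval_has_min (f : Z -> R) (m : nat) :
  exists i, (0 <= i <= Z.of_nat m)%Z /\
            forall j, (0 <= j <= Z.of_nat m)%Z -> f i <= f j.
Proof.
  induction m as [|m [i [Hi Hmin]]].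
  - exists 0%Z; split; [lia|]; intros j Hj.
    replace j with 0%Z by lia; lra.
  - destruct (Rle_dec (f i) (f (Z.of_nat (S m)))) as [Hle|Hgt].
    + exists i; split; [lia|]; intros j Hj.
      destruct (Z.eq_dec j (Z.of_nat (S m))) as [->|]; auto; apply Hmin; lia.
    + exists (Z.of_nat (S m)); split; [lia|]; intros j Hj.
      destruct (Z.eq_dec j (Z.of_nat (S m))) as [->|]; [lra|].
      specialize (Hmin j ltac:(lia)); lra.
Qed.

Lemma periodic_Z_has_min (f : Z -> R) (k : Z) :
  (0 < k)%Z -> (forall n, f (n + k)%Z = f n) -> exists n0, forall n, f n0 <= f n.
Proof.
  intros Hk Hper.
  destruct (Z_interval_has_min f (Z.to_nat (k - 1))) as [n0 [_ Hmin]].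
  exists n0; intro n.
  rewrite (Z.div_mod n k) by lia.
  rewrite Z.add_comm, Z.mul_comm, periodic_Z_shift_mul by exact Hper.
  pose proof (Z.mod_pos_bound n k Hk).
  apply Hmin; lia.
Qed.

Definition drift (x : Z -> R) (c : R) (n : Z) : R := x n - IZR n * c.

Lemma drift_periodic (x : Z -> R) (k : Z) (t : R) :
  (k <> 0)%Z -> (forall n, x (n + k)%Z = x n + t) ->
  forall n, drift x (t / IZR k) (n + k)%Z = drift x (t / IZR k) n.
Proof.
  intros Hk Hper n; unfold drift.
  rewrite Hper, plus_IZR; field; apply not_0_IZR, Hk.
Qed.

Lemma drift_const_at_min (F : R -> R) (x : Z -> R) (c : R) (n0 : Z) :
  force_law F -> configuration x -> in_equilibrium F x n0 ->
  (forall n, drift x c n0 <= drift x c n) ->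
  forall m, (n0 <= m)%Z -> drift x c m = drift x c n0.
Proof.
  intros HF Hx Heq Hmin.
  assert (Hidx : forall j : nat,
      IZR (n0 + Z.of_nat j + 1) = IZR n0 + (INR j + 1) /\
      IZR (n0 - Z.of_nat j - 1) = IZR n0 - (INR j + 1))
    by (intro j; rewrite plus_IZR, minus_IZR, plus_IZR, minus_IZR, <- INR_IZR_INZ; lra).
  assert (Hleft : forall j : nat, x n0 - x (n0 - Z.of_nat j - 1)%Z <= (INR j + 1) * c)
    by (intro j; pose proof (Hmin (n0 - Z.of_nat j - 1)%Z); destruct (Hidx j);
        unfold drift in *; nra).
  assert (Hright : forall j : nat, (INR j + 1) * c <= x (n0 + Z.of_nat j + 1)%Z - x n0)
    by (intro j; pose proof (Hmin (n0 + Z.of_nat j + 1)%Z); destruct (Hidx j);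
        unfold drift in *; nra).
  pose proof (equilibrium_gaps_eq F x n0 HF Hx Heq
    (fun j => Rle_trans _ _ _ (Hleft j) (Hright j))) as Hgaps.
  intros m Hm.
  destruct (Z.eq_dec m n0) as [->|Hne]; [reflexivity|].
  replace m with (n0 + Z.of_nat (Z.to_nat (m - n0 - 1)) + 1)%Z by lia.
  set (j := Z.to_nat (m - n0 - 1)).
  pose proof (Hleft j); pose proof (Hright j); pose proof (Hgaps j).
  destruct (Hidx j) as [Hj _]; unfold drift; rewrite Hj; lra.
Qed.

Theorem mainTheorem2 (F : R -> R) (x : Z -> R) (k : Z) (t : R) :
  force_law F ->
  equilibrium_configuration F x ->
  (1 <= k)%Z -> 0 < t ->
  (forall n : Z, x (n + k)%Z = x n + t) ->
  trivial_configuration x.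
Proof.
  intros HF [Hx Heq] Hk _ Hper.
  set (c := t / IZR k).
  assert (Hdrift : forall n, drift x c (n + k)%Z = drift x c n)
    by (apply drift_periodic; [lia | exact Hper]).
  destruct (periodic_Z_has_min (drift x c) k ltac:(lia) Hdrift) as [n0 Hmin].
  assert (Hconst : forall n, drift x c n = drift x c n0).
  { apply (periodic_Z_const_of_const_ge R (drift x c) k Hdrift n0); [lia|].
    exact (drift_const_at_min F x c n0 HF Hx (Heq n0) Hmin). }
  exists c; intro n.
  pose proof (Hconst n) as Hn; pose proof (Hconst (n + 1)%Z) as Hn1.
  unfold drift in *; rewrite plus_IZR in Hn1; lra.
Qed.
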